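(* Let $\mathcal{A}=\mathbb{C}\setminus(-\infty,0]$ and let $H$ be the principal branch on $\mathcal{A}$ given by $H(z)=\ln\frac{z(1+z)}{1+z^2}\big/\ln\frac{1+z^2}{1+z}$ for $z\ne1$ and $H(1)=1$ (principal logarithm, $-\pi<\arg<\pi$). For $z=re^{i\theta}\in\mathcal{A}$, the function $zH(z)$ tends to $0$ as $r\to\infty$, uniformly in $\theta$.
   Context: $H$ is the holomorphic extension to $\mathcal{A}$ of $H(x)=\frac{\ln x}{\ln(x^2+1)-\ln(x+1)}-1$, $x\in(0,\infty)$. *)

From Stdlib Require Import Reals.
From Coquelicot Require Import Coquelicot.
Open Scope R_scope.

(* Principal argument, values in (-PI, PI] (PI on the closed negative real
   axis, including 0, where it is irrelevant for the principal branch with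
   -PI < arg < PI).  For w off (-oo,0], Arg w = 2 atan (Im w / (|w| + Re w)),
   the standard half-angle formula. *)
Definition Arg (w : C) : R :=
  if Req_EM_T (Cmod w + fst w) 0 then PI
  else 2 * atan (snd w / (Cmod w + fst w)).

Definition Clog (w : C) : C := (ln (Cmod w), Arg w).

Definition H (z : C) : C :=
  if Ceq_dec z (RtoC 1) then RtoC 1
  else Cdiv (Clog (Cdiv (Cmult z (Cplus (RtoC 1) z))
                        (Cplus (RtoC 1) (Cmult z z))))
            (Clog (Cdiv (Cplus (RtoC 1) (Cmult z z)) (Cplus (RtoC 1) z))).

Definition polar (r theta : R) : C := (r * cos theta, r * sin theta).

From Stdlib Require Import Reals Lra.
From Coquelicot Require Import Coquelicot.
Open Scope R_scope.

(* For |z| = r >= 3 the numerator argument z(1+z)/(1+z^2) = 1 + (z-1)/(1+z^2)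
   lies within 1/(r-1) of 1, so its logarithm has modulus O(1/r), while the
   denominator argument (1+z^2)/(1+z) has modulus at least r-1, so its
   logarithm has modulus at least ln(r-1).  Hence |z H(z)| <= 16/ln(r-1),
   a bound depending on r only. *)

Lemma Rabs_ln_le x : / 2 <= x -> Rabs (ln x) <= 2 * Rabs (x - 1).
Proof.
  intros Hx.
  assert (Hup : ln x <= x - 1).
  { pose proof (exp_ineq1_le (ln x)) as E. rewrite exp_ln in E by lra. lra. }
  assert (Hlow : 1 - / x <= ln x).
  { pose proof (exp_ineq1_le (ln (/ x))) as E.
    rewrite exp_ln, ln_Rinv in E by (try apply Rinv_0_lt_compat; lra). lra. }
  assert (Hinv : / x <= 2).
  { rewrite <- (Rinv_inv 2). apply Rinv_le_contravar; lra. }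
  assert (Hpos : 0 < / x) by (apply Rinv_0_lt_compat; lra).
  assert (E : 1 - / x = (x - 1) * / x) by (field; lra).
  split_Rabs; nra.
Qed.

Lemma atan_lt_double x : 0 < x -> atan x < 2 * x.
Proof.
  intros Hx.
  assert (Hincr : 2 * 0 - atan 0 < 2 * x - atan x).
  { apply (incr_function (fun t => 2 * t - atan t) m_infty p_infty
      (fun t => 2 * 1 - / (1 + t ^ 2))); try exact I; try exact Hx.
    - intros t _ _. apply is_derive_Reals.
      apply (derivable_pt_lim_minus (fun t => 2 * t) atan).
      + apply (derivable_pt_lim_scal (fun t => t)), derivable_pt_lim_id.
      + apply derivable_pt_lim_atan.
    - intros t _ _.
      assert (/ (1 + t ^ 2) <= 1).
      { rewrite <- Rinv_1. apply Rinv_le_contravar; nra. }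
      lra. }
  rewrite atan_0 in Hincr. lra.
Qed.

Lemma Rabs_atan_le x : Rabs (atan x) <= 2 * Rabs x.
Proof.
  destruct (Rtotal_order x 0) as [Hn | [-> | Hp]].
  - pose proof (atan_lt_double (- x)) as B. rewrite atan_opp in B.
    assert (atan x < 0) by (rewrite <- atan_0; apply atan_increasing; lra).
    rewrite !Rabs_left; lra.
  - rewrite atan_0, Rabs_R0. lra.
  - pose proof (atan_lt_double x Hp).
    assert (0 < atan x) by (rewrite <- atan_0; apply atan_increasing; lra).
    rewrite !Rabs_pos_eq; lra.
Qed.

Lemma Rabs_Arg_le w :
  0 < Cmod w + fst w -> Rabs (Arg w) <= 4 * Rabs (snd w) / (Cmod w + fst w).
Proof.
  intros Hc. unfold Arg.
  destruct (Req_EM_T (Cmod w + fst w) 0) as [E | _]; [lra |].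
  rewrite Rabs_mult, (Rabs_pos_eq 2) by lra.
  pose proof (Rabs_atan_le (snd w / (Cmod w + fst w))) as B.
  unfold Rdiv in *. rewrite Rabs_mult, Rabs_inv, (Rabs_pos_eq (_ + _)) in B by lra.
  lra.
Qed.

Lemma Rabs_Cmod_sub_le (u v : C) : Rabs (Cmod u - Cmod v) <= Cmod (u - v).
Proof. exact (norm_triangle_inv (V := C_NormedModule) u v). Qed.

Lemma Cmod_add_1_ge (u : C) : Cmod u - 1 <= Cmod (1 + u).
Proof.
  pose proof (Rabs_Cmod_sub_le u (Copp 1)) as B.
  rewrite Cmod_m1 in B.
  replace (u - Copp 1)%C with (1 + u)%C in B
    by (apply injective_projections; simpl; ring).
  eapply Rle_trans; [apply Rle_abs | exact B].
Qed.

(* The constant 8 comes from |ln|w|| <= 2d, |Arg w| <= 4d and sqrt 2 <= 2. *)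
Lemma Cmod_Clog_le w : Cmod (w - 1) <= / 2 -> Cmod (Clog w) <= 8 * Cmod (w - 1).
Proof.
  destruct w as [a b]. set (d := Cmod ((a, b) - 1)%C). intros Hd.
  pose proof (Rmax_Cmod ((a, b) - 1)%C) as Hm.
  change (Rmax (Rabs (a - 1)) (Rabs (b - 0)) <= d) in Hm.
  rewrite Rminus_0_r in Hm.
  assert (Hd0 : 0 <= d) by apply Cmod_ge_0.
  assert (Ha : Rabs (a - 1) <= d) by (eapply Rle_trans; [apply Rmax_l | exact Hm]).
  assert (Hb : Rabs b <= d) by (eapply Rle_trans; [apply Rmax_r | exact Hm]).
  assert (Hw : Rabs (Cmod (a, b) - 1) <= d).
  { pose proof (Rabs_Cmod_sub_le (a, b) 1) as B. rewrite Cmod_1 in B. exact B. }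
  assert (Hln : Rabs (ln (Cmod (a, b))) <= 2 * d).
  { eapply Rle_trans; [apply Rabs_ln_le | lra]. split_Rabs; lra. }
  assert (Hc : 1 <= Cmod (a, b) + a) by (split_Rabs; lra).
  assert (Harg : Rabs (Arg (a, b)) <= 4 * d).
  { eapply Rle_trans; [apply Rabs_Arg_le; simpl; lra |]. simpl fst; simpl snd.
    apply (Rmult_le_reg_r (Cmod (a, b) + a)); [lra |].
    unfold Rdiv. rewrite Rmult_assoc, Rinv_l by lra. nra. }
  assert (Hsqrt2 : sqrt 2 <= 2).
  { rewrite <- (sqrt_square 2) at 2 by lra. apply sqrt_le_1_alt. lra. }
  eapply Rle_trans; [apply Cmod_2Rmax |]. unfold Clog; simpl fst; simpl snd.
  assert (Hmax : Rmax (Rabs (ln (Cmod (a, b)))) (Rabs (Arg (a, b))) <= 4 * d)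
    by (apply Rmax_lub; lra).
  pose proof (Rle_trans _ _ _ (Rabs_pos (ln (Cmod (a, b)))) (Rmax_l _ (Rabs (Arg (a, b))))).
  pose proof (sqrt_pos 2). nra.
Qed.

Lemma ln_Cmod_le_Cmod_Clog w : ln (Cmod w) <= Cmod (Clog w).
Proof.
  eapply Rle_trans; [apply Rle_abs | exact (re_le_Cmod (Clog w))].
Qed.

Lemma Cmod_H_num_sub_1_le z :
  3 <= Cmod z -> Cmod (z * (1 + z) / (1 + z * z) - 1)%C <= / (Cmod z - 1).
Proof.
  intros Hr. set (r := Cmod z) in *.
  pose proof (Cmod_add_1_ge (z * z)) as Hzz. rewrite Cmod_mult in Hzz. fold r in Hzz.
  assert (Nz : (1 + z * z)%C <> 0%C) by (intro E; rewrite E, Cmod_0 in Hzz; nra).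
  assert (Hz1 : Cmod (z - 1) <= r + 1).
  { unfold Cminus. eapply Rle_trans; [apply Cmod_triangle |].
    rewrite Cmod_opp, Cmod_1. fold r. lra. }
  replace (z * (1 + z) / (1 + z * z) - 1)%C with ((z - 1) / (1 + z * z))%C
    by (field; exact Nz).
  rewrite Cmod_div by exact Nz.
  apply (Rle_trans _ ((r + 1) / (r * r - 1))).
  - unfold Rdiv. apply Rmult_le_compat; try apply Cmod_ge_0; try exact Hz1.
    + left. apply Rinv_0_lt_compat. nra.
    + apply Rinv_le_contravar; nra.
  - right. field. split; nra.
Qed.

Lemma Cmod_H_den_ge z :
  3 <= Cmod z -> Cmod z - 1 <= Cmod ((1 + z * z) / (1 + z))%C.
Proof.
  intros Hr. set (r := Cmod z) in *.
  pose proof (Cmod_add_1_ge (z * z)) as Hzz. rewrite Cmod_mult in Hzz. fold r in Hzz.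
  pose proof (Cmod_add_1_ge z) as Hz. fold r in Hz.
  assert (Hz' : Cmod (1 + z) <= r + 1).
  { eapply Rle_trans; [apply Cmod_triangle |]. rewrite Cmod_1. unfold r. lra. }
  assert (Nz : (1 + z)%C <> 0%C) by (intro E; rewrite E, Cmod_0 in Hz; lra).
  rewrite Cmod_div by exact Nz.
  apply (Rle_trans _ ((r * r - 1) / (r + 1))).
  - right. field. lra.
  - unfold Rdiv. apply Rmult_le_compat.
    + nra.
    + left. apply Rinv_0_lt_compat. lra.
    + exact Hzz.
    + apply Rinv_le_contravar; lra.
Qed.

Lemma Cmod_mul_H_le z : 3 <= Cmod z -> Cmod (z * H z)%C <= 16 / ln (Cmod z - 1).
Proof.
  intros Hr. set (r := Cmod z) in *.
  assert (Hln2 : 0 < ln 2) by (rewrite <- ln_1; apply ln_increasing; lra).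
  assert (Hlnr : ln 2 <= ln (r - 1)) by (apply ln_le; lra).
  assert (Hnum : Cmod (Clog (z * (1 + z) / (1 + z * z))) <= 8 / (r - 1)).
  { pose proof (Cmod_H_num_sub_1_le z Hr) as B. fold r in B.
    assert (/ (r - 1) <= / 2) by (apply Rinv_le_contravar; lra).
    eapply Rle_trans; [apply Cmod_Clog_le; lra |]. unfold Rdiv. lra. }
  assert (Hden : ln (r - 1) <= Cmod (Clog ((1 + z * z) / (1 + z)))).
  { eapply Rle_trans; [| apply ln_Cmod_le_Cmod_Clog].
    apply ln_le; [lra | exact (Cmod_H_den_ge z Hr)]. }
  assert (Nden : Clog ((1 + z * z) / (1 + z)) <> 0%C)
    by (intro E; rewrite E, Cmod_0 in Hden; lra).
  unfold H. destruct (Ceq_dec z 1) as [E | _].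
  { unfold r in Hr. rewrite E, Cmod_1 in Hr. lra. }
  rewrite Cmod_mult, Cmod_div by exact Nden. fold r.
  assert (Hr8 : r * (8 / (r - 1)) <= 16).
  { apply (Rmult_le_reg_r (r - 1)); [lra |].
    unfold Rdiv. rewrite Rmult_assoc, Rmult_assoc, Rinv_l by lra. nra. }
  pose proof (Cmod_ge_0 (Clog (z * (1 + z) / (1 + z * z)))).
  unfold Rdiv. rewrite <- Rmult_assoc.
  apply Rmult_le_compat; try nra.
  - left. apply Rinv_0_lt_compat. lra.
  - apply Rinv_le_contravar; lra.
Qed.

Lemma Cmod_polar r t : 0 <= r -> Cmod (polar r t) = r.
Proof.
  intros Hr. unfold Cmod, polar. simpl fst; simpl snd.
  replace ((r * cos t) ^ 2 + (r * sin t) ^ 2) with (r ^ 2).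
  - apply sqrt_pow2. lra.
  - pose proof (sin2_cos2 t). unfold Rsqr in *. nra.
Qed.

Theorem lemma4p2 :
  forall eps : R, 0 < eps ->
  exists R0 : R, forall r theta : R,
    R0 < r -> -PI < theta < PI ->
    Cmod (Cmult (polar r theta) (H (polar r theta))) < eps.
Proof.
  intros eps He. exists (3 + exp (16 / eps)). intros r t Hr _.
  pose proof (exp_pos (16 / eps)).
  assert (Hm : Cmod (polar r t) = r) by (apply Cmod_polar; lra).
  eapply Rle_lt_trans; [apply Cmod_mul_H_le; lra |]. rewrite Hm.
  assert (Hl : 16 / eps < ln (r - 1)).
  { rewrite <- (ln_exp (16 / eps)). apply ln_increasing; lra. }
  assert (0 < 16 / eps) by (apply Rdiv_lt_0_compat; lra).
  apply Rlt_div_l; [lra |]. rewrite Rmult_comm.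
  apply Rlt_div_l; [lra | exact Hl].
Qed.
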